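(* Let $(b,c)$ be a connected graph over a countable set $X$ with an action of a group $G$ such that $H=H_{b,c}$ is $G$-invariant, fix $x_0\in X$, let $R\subseteq G$ be a subgroup, and let $f\in\mathcal{K}^R$ be harmonic. Let $\mu_f$ be a Borel probability measure on $\mathrm{ex}\,\mathcal{K}^R$ representing $f$ (as provided by Choquet's theorem), i.e. $f(x)=\int_{\mathrm{ex}\,\mathcal{K}^R}k(x)\,d\mu_f(k)$ for all $x\in X$. Then the set $\{k\in\mathrm{ex}\,\mathcal{K}^R: Hk\neq0\}$ is a $\mu_f$-null set.
   Context: A graph over $X$ is $(b,c)$ with $b:X\times X\to[0,\infty)$, $c:X\to\mathbb{R}$, $\sum_yb(x,y)<\infty$ ($b$ need not be symmetric); connected: any two points are joined by a finite sequence $y_1,\dots,y_n$ with $b(y_i,y_{i+1})>0$. $C(X)$ carries the product topology. $H_{b,c}f(x)=\sum_yb(x,y)(f(x)-f(y))+c(x)f(x)$ on $\mathrm{Dom}(H)=\{f:\sum_yb(x,y)|f(y)|<\infty\ \forall x\}$; harmonic: $Hf=0$; $\mathcal{H}^+$: nonnegative nonzero harmonic functions. $T_gf(x)=f(g^{-1}x)$; $H$ is $G$-invariant if $T_g$ preserves $\mathrm{Dom}(H)$ and $HT_g=T_gH$. $\mathcal{K}$ is the closure in $C(X)$ of $\{f\in\mathcal{H}^+:f(x_0)=1\}$ (a compact convex set), and $\mathcal{K}^R=\{f\in\mathcal{K}: T_gf=f\ \forall g\in R\}$; $\mathrm{ex}$ denotes the set of extreme points. *)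

From HB Require Import structures.
From mathcomp Require Import all_boot all_order all_algebra.
From mathcomp Require Import all_classical all_reals all_analysis.
Set Implicit Arguments. Unset Strict Implicit. Unset Printing Implicit Defensive.
Import Order.TTheory GRing.Theory Num.Theory.
Import numFieldNormedType.Exports.
Local Open Scope classical_set_scope.
Local Open Scope ring_scope.

Section GraphDefs.
Context {X : countType} {R : realType}.

Definition is_graph (b : X -> X -> R) : Prop :=
  (forall x y, 0 <= b x y) /\ (forall x, summable setT (fun y => (b x y)%:E)).

Definition graph_connected (b : X -> X -> R) : Prop :=
  forall x y : X, exists s : seq X,
    path (fun u v => 0 < b u v) x s /\ last x s = y.

Definition domH (b : X -> X -> R) (f : X -> R) : Prop :=
  forall x, summable setT (fun y => (b x y * f y)%:E).

Definition rsum (u : X -> R) : R :=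
  fine (\esum_(y in setT) (fun y => (u y)%:E)^\+ y
        - \esum_(y in setT) (fun y => (u y)%:E)^\- y)%E.

Definition Hop (b : X -> X -> R) (c : X -> R) (f : X -> R) : X -> R :=
  fun x => rsum (fun y => b x y * (f x - f y)) + c x * f x.

Definition graph_harmonic (b : X -> X -> R) (c : X -> R) (f : X -> R) : Prop :=
  domH b f /\ forall x, Hop b c f x = 0.

Definition Hplus (b : X -> X -> R) (c : X -> R) : set (X -> R) :=
  [set f | graph_harmonic b c f /\ (forall x, 0 <= f x) /\ f <> (fun _ => 0)].

Definition Kset (b : X -> X -> R) (c : X -> R) (x0 : X) : set (X -> R) :=
  @closure {ptws X -> R} [set f | Hplus b c f /\ f x0 = 1].

End GraphDefs.

Definition is_group_action {G X : Type} (mul : G -> G -> G) (inv : G -> G)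
    (one : G) (act : G -> X -> X) : Prop :=
  (forall g h k, mul g (mul h k) = mul (mul g h) k) /\
  (forall g, mul one g = g) /\ (forall g, mul g one = g) /\
  (forall g, mul (inv g) g = one) /\ (forall g, mul g (inv g) = one) /\
  (forall x, act one x = x) /\
  (forall g h x, act (mul g h) x = act g (act h x)).

Definition is_subgroup {G : Type} (mul : G -> G -> G) (inv : G -> G)
    (one : G) (Rg : set G) : Prop :=
  [/\ Rg one, (forall g h, Rg g -> Rg h -> Rg (mul g h)) &
      (forall g, Rg g -> Rg (inv g))].

Definition Tg {G X V : Type} (inv : G -> G) (act : G -> X -> X) (g : G)
    (f : X -> V) : X -> V := fun x => f (act (inv g) x).

Definition H_invariant {G : Type} {X : countType} {R : realType}
    (inv : G -> G) (act : G -> X -> X) (b : X -> X -> R) (c : X -> R) : Prop :=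
  forall g f, domH b f ->
    domH b (Tg inv act g f) /\ Hop b c (Tg inv act g f) = Tg inv act g (Hop b c f).

Definition KRset {G : Type} {X : countType} {R : realType}
    (inv : G -> G) (act : G -> X -> X) (b : X -> X -> R) (c : X -> R) (x0 : X)
    (Rg : set G) : set (X -> R) :=
  [set f | Kset b c x0 f /\ forall g, Rg g -> Tg inv act g f = f].

Definition extreme {X : Type} {R : realType} (A : set (X -> R)) : set (X -> R) :=
  [set k | A k /\ forall f g (t : R), A f -> A g -> 0 < t < 1 ->
      k = (fun x => t * f x + (1 - t) * g x) -> f = g].

Definition borelC (X : countType) (R : realType) :=
  g_sigma_algebraType (@open {ptws X -> R}).

From HB Require Import structures.
From mathcomp Require Import all_boot all_order all_algebra.
From mathcomp Require Import all_classical all_reals all_analysis.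
From mathcomp Require Import measurable_realfun ring.
Set Implicit Arguments.
Unset Strict Implicit.
Unset Printing Implicit Defensive.

Import Order.TTheory GRing.Theory Num.Theory.
Import numFieldNormedType.Exports.
Local Open Scope classical_set_scope.
Local Open Scope ring_scope.

(* Every k in K is nonnegative and superharmonic, i.e. sum_y b(x,y) k(y) <=
   (deg x + c x) k(x): these conditions are closed in the product topology and
   hold with equality on H^+.  Integrating the nonnegative defect (Hk)(x)
   against mu_f gives (Hf)(x) = 0 by monotone convergence, so (Hk)(x) = 0 for
   mu_f-almost every k, and X is countable. *)

Section CountableSums.
Local Open Scope ereal_scope.
Context {X : countType} {R : realType}.

Definition pickle_term {V : nmodType} (a : X -> V) (n : nat) : V :=
  if @pickle_inv X n is Some y then a y else 0%R.

Lemma pickle_term_EFin (a : X -> R) n :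
  pickle_term (fun y => (a y)%:E) n = (pickle_term a n)%:E.
Proof. by rewrite /pickle_term; case: pickle_inv. Qed.

Lemma pickle_term_ge0 (a : X -> \bar R) :
  (forall y, 0 <= a y) -> forall n, 0 <= pickle_term a n.
Proof. by move=> a0 n; rewrite /pickle_term; case: pickle_inv. Qed.

Lemma esum_pickle (a : X -> \bar R) : (forall y, 0 <= a y) ->
  \esum_(y in [set: X]) a y = \sum_(n <oo) pickle_term a n.
Proof.
move=> a0; rewrite nneseries_esumT; last exact: pickle_term_ge0.
rewrite (esumID (range (@pickle X))); last by move=> n _; exact: pickle_term_ge0.
rewrite [X in _ + X]esum1 ?adde0; last first.
  move=> n [_ /= npickle]; rewrite /pickle_term; case E: pickle_inv => [y|//].
  by exfalso; apply: npickle; exists y => //; have := @pickle_invK X n; rewrite E.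
rewrite setTI esum_image; last by move=> ? ? _ _; exact: (pcan_inj (@pickleK X)).
by apply: eq_esum => y _; rewrite /pickle_term pickleK_inv.
Qed.

Lemma ge0_esumZl (r : R) (a : X -> \bar R) : (0 <= r)%R -> (forall y, 0 <= a y) ->
  \esum_(y in [set: X]) (r%:E * a y) = r%:E * \esum_(y in [set: X]) a y.
Proof.
move=> r0 a0; rewrite !esum_pickle//; last by move=> y; rewrite mule_ge0.
rewrite -nneseriesZl//; last by move=> n _; exact: pickle_term_ge0.
by apply: eq_eseriesr => n _; rewrite /pickle_term; case: pickle_inv; rewrite ?mule0.
Qed.

Lemma ge0_esum_le_EFinP (a : X -> R) (M : R) : (forall y, 0 <= a y)%R ->
  \esum_(y in [set: X]) (a y)%:E <= M%:E <->
  forall n, (\sum_(i < n) pickle_term a i <= M)%R.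
Proof.
move=> a0; have a0E y : 0 <= (a y)%:E by rewrite lee_fin.
have partialE n : (\sum_(i < n) pickle_term a i)%:E =
    \sum_(0 <= i < n) pickle_term (fun y => (a y)%:E) i.
  by rewrite big_mkord -sumEFin; apply: eq_bigr => i _; rewrite pickle_term_EFin.
rewrite esum_pickle//; split=> [aM n|aM].
- rewrite -lee_fin partialE; apply: le_trans aM.
  by apply: nneseries_lim_ge => i _ _; exact: pickle_term_ge0.
- apply: lime_le; first by apply: is_cvg_nneseries => i _ _; exact: pickle_term_ge0.
  by apply: nearW => n; rewrite /= -partialE lee_fin.
Qed.

Lemma ge0_summableE {T : choiceType} (D : set T) (a : T -> \bar R) :
  (forall t, D t -> 0 <= a t) -> summable D a = (\esum_(t in D) a t \is a fin_num).
Proof.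
move=> a0; rewrite summableE; congr (_ \is a fin_num).
by apply: eq_esum => t /a0/gee0_abs.
Qed.

End CountableSums.

Section NonnegSuperharmonic.
Context {X : countType} {R : realType}.
Variables (b : X -> X -> R) (c : X -> R).
Hypothesis gb : is_graph b.

Definition Hdiag (x : X) : R := fine (\esum_(y in [set: X]) (b x y)%:E) + c x.

Lemma HopE_ge0 (g : X -> R) x : (forall y, 0 <= g y) ->
  summable setT (fun y => (b x y * g y)%:E) ->
  Hop b c g x = Hdiag x * g x - fine (\esum_(y in [set: X]) (b x y * g y)%:E).
Proof.
move=> g0 sbg; have [b0 sb] := gb.
have bg0 y : (0 <= (b x y * g y)%:E)%E by rewrite lee_fin mulr_ge0.
have b_fin : \esum_(y in [set: X]) (b x y)%:E \is a fin_num.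
  by rewrite -ge0_summableE // => y _; rewrite lee_fin.
have bg_fin : \esum_(y in [set: X]) (b x y * g y)%:E \is a fin_num.
  by rewrite -ge0_summableE.
have gbE : \esum_(y in [set: X]) (g x * b x y)%:E =
    ((g x)%:E * \esum_(y in [set: X]) (b x y)%:E)%E.
  by rewrite -ge0_esumZl // => y; rewrite lee_fin.
have sgb : summable setT (fun y => (g x * b x y)%:E).
  by rewrite ge0_summableE ?gbE ?fin_numM // => y _; rewrite lee_fin mulr_ge0.
rewrite /Hop /rsum.
have -> : (fun y => (b x y * (g x - g y))%:E) =
    ((fun y => (g x * b x y)%:E) \- (fun y => (b x y * g y)%:E))%E.
  by apply/funext => y /=; rewrite -EFinB mulrBr mulrC.
rewrite esumB //; last by move=> y _; rewrite lee_fin mulr_ge0.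
rewrite gbE fineB ?fin_numM // fineM // /Hdiag /=; ring.
Qed.

Lemma harmonic_esum (f : X -> R) x : graph_harmonic b c f -> (forall y, 0 <= f y) ->
  \esum_(y in [set: X]) (b x y * f y)%:E = (Hdiag x * f x)%:E.
Proof.
move=> [df Hf] f0; have [b0 _] := gb.
have bf_fin : \esum_(y in [set: X]) (b x y * f y)%:E \is a fin_num.
  by rewrite -ge0_summableE // => y _; rewrite lee_fin mulr_ge0.
move: (Hf x); rewrite HopE_ge0 // => /eqP; rewrite subr_eq0 => /eqP ->.
by rewrite fineK.
Qed.

(* The row sum as a series over codes of X, which makes it measurable in [k]. *)
Definition row_series x (k : X -> R) : \bar R :=
  (\sum_(n <oo) pickle_term (fun y => (b x y * k y)%:E) n)%E.

Lemma row_seriesE k x : (forall y, 0 <= k y) ->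
  row_series x k = \esum_(y in [set: X]) (b x y * k y)%:E.
Proof.
have [b0 _] := gb.
by move=> k0; rewrite esum_pickle // => y; rewrite lee_fin mulr_ge0.
Qed.

Definition nneg_superharmonic : set (X -> R) :=
  [set g | (forall y, 0 <= g y) /\ forall x,
     (\esum_(y in [set: X]) (b x y * g y)%:E <= (Hdiag x * g x)%:E)%E].

Lemma Hplus_nneg_superharmonic : Hplus b c `<=` nneg_superharmonic.
Proof. by move=> g [gh [g0 _]]; split=> // x; rewrite harmonic_esum. Qed.

Lemma closed_nneg_superharmonic : closed (nneg_superharmonic : set {ptws X -> R}).
Proof.
have [b0 _] := gb.
have eval_cont y : continuous (fun g : {ptws X -> R} => g y).
  exact: (@proj_continuous X (fun _ : X => R) y).
have defect_cont x n : continuous (fun g : {ptws X -> R} =>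
    Hdiag x * g x - \sum_(i < n) pickle_term (fun y => b x y * g y) i).
  have row_cont : continuous (fun g : {ptws X -> R} =>
      \sum_(i < n) pickle_term (fun y => b x y * g y) i).
    apply: (@continuous_big R _ +%R 0%R xpredT (@add_continuous R)) => i _ g.
    rewrite /pickle_term; case: pickle_inv => [y|]; last exact: cst_continuous.
    by apply: continuousM; [exact: cst_continuous|exact: eval_cont].
  move=> g.
  have diag_cont : {for g, continuous (fun g : {ptws X -> R} => Hdiag x * g x)}.
    by apply: continuousM; [exact: cst_continuous|exact: eval_cont].
  exact: continuousB diag_cont (row_cont g).
have -> : (nneg_superharmonic : set {ptws X -> R}) =
    \bigcap_(y in setT) ((fun g : {ptws X -> R} => g y) @^-1` [set r | 0 <= r]) `&`
    \bigcap_(xn in setT) ((fun g : {ptws X -> R} => Hdiag xn.1 * g xn.1 -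
       \sum_(i < xn.2) pickle_term (fun y => b xn.1 y * g y) i) @^-1` [set r | 0 <= r]).
  apply/seteqP; split=> g /= [g0 gS].
    split=> [y _|[x n] _] /=; first exact: g0.
    have bg0 y : 0 <= b x y * g y by rewrite mulr_ge0.
    by rewrite subr_ge0; move: (gS x); rewrite (ge0_esum_le_EFinP _ bg0); apply.
  split=> [y|x]; first exact: g0 y I.
  have bg0 y : 0 <= b x y * g y by rewrite mulr_ge0 // g0.
  apply/(ge0_esum_le_EFinP _ bg0) => n.
  by rewrite -subr_ge0; exact: gS (x, n) I.
apply: closedI; apply: closed_bigI => ? _;
  (apply: preimage_closed; last exact: closed_ge) => ? _.
- exact: eval_cont.
- exact: defect_cont.
Qed.

Lemma Kset_nneg_superharmonic x0 : Kset b c x0 `<=` nneg_superharmonic.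
Proof.
move=> k /(closureS (B := nneg_superharmonic : set {ptws X -> R})).
rewrite -(closure_id _).1; last exact: closed_nneg_superharmonic.
by apply=> g [/Hplus_nneg_superharmonic].
Qed.

Lemma nneg_superharmonic_fin_num g x : nneg_superharmonic g ->
  \esum_(y in [set: X]) (b x y * g y)%:E \is a fin_num.
Proof.
move=> [g0 /(_ x) gS]; have [b0 _] := gb.
rewrite ge0_fin_numE; first exact: le_lt_trans gS (ltry _).
by apply: esum_ge0 => y _; rewrite lee_fin mulr_ge0.
Qed.

Lemma nneg_superharmonic_HopE g x : nneg_superharmonic g ->
  Hop b c g x = Hdiag x * g x - fine (\esum_(y in [set: X]) (b x y * g y)%:E).
Proof.
move=> Sg; have [b0 _] := gb; have [g0 _] := Sg.
apply: HopE_ge0 => //; rewrite ge0_summableE; first exact: nneg_superharmonic_fin_num.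
by move=> y _; rewrite lee_fin mulr_ge0.
Qed.

End NonnegSuperharmonic.
Lemma measurable_eval {X : countType} {R : realType} (y : X) :
  measurable_fun [set: borelC X R] (fun k : borelC X R => k y).
Proof.
apply: (measurability _ (RGenOpens.measurableE R)).
move=> _ [_ [a [a' ->] <-]]; rewrite setTI; apply: sub_sigma_algebra.
have /continuousP : continuous (fun g : {ptws X -> R} => g y).
  exact: (@proj_continuous X (fun _ : X => R) y).
by apply; exact: interval_open.
Qed.

Lemma ae_forall_countable d (T : sigmaRingType d) (R : realType)
    (mu : {measure set T -> \bar R}) (I : countType) (P : I -> T -> Prop) :
  (forall i, {ae mu, forall t, P i t}) -> {ae mu, forall t, forall i, P i t}.
Proof.
move=> aeP.
have : {ae mu, forall t, forall n, if @pickle_inv I n is Some i then P i t else True}.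
  by apply: ae_foralln => n; case: pickle_inv => [i|]; [exact: aeP|exact: aeW].
by apply: filterS => t Pt i; have := Pt (pickle i); rewrite pickleK_inv.
Qed.

Section IntegralConull.
Local Open Scope ereal_scope.
Context d (T : measurableType d) (R : realType).
Variable mu : {measure set T -> \bar R}.

Lemma le_integral_ge0 (f1 f2 : T -> \bar R) : (forall t, 0 <= f1 t) ->
  (forall t, f1 t <= f2 t) ->
  \int[mu]_(t in [set: T]) f1 t <= \int[mu]_(t in [set: T]) f2 t.
Proof.
move=> f10 f12.
have f20 t : 0 <= f2 t by exact: le_trans (f10 t) (f12 t).
rewrite !ge0_integralTE //; apply/ge_ereal_sup => _ [h hf1 <-].
by apply: ereal_sup_ubound; exists h => //= t; exact: le_trans (hf1 t) (f12 t).
Qed.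

(* [E] need not be measurable, which rules out the library's a.e. lemmas. *)
Lemma integral_conull (E D : set T) (g : T -> \bar R) :
  measurable D -> D `<=` E -> mu (~` D) = 0 -> measurable_fun [set: T] g ->
  (forall t, E t -> 0 <= g t) ->
  \int[mu]_(t in E) g t = \int[mu]_(t in D) g t.
Proof.
move=> mD DE CD0 mg g0.
have mCD : measurable (~` D) by exact: measurableC.
have gD0 t : 0 <= (g \_ D) t by rewrite patchE; case: ifPn => // /set_mem /DE /g0.
have oo0 t : 0 <= ((cst (+oo : \bar R)) \_ (~` D)) t.
  by rewrite patchE; case: ifPn => _ /=; rewrite ?le0y.
have gDE t : (g \_ D) t <= (g \_ E) t.
  rewrite !patchE; case: ifPn => [/set_mem Dt|_].
    by rewrite ifT //; exact/mem_set/DE.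
  by case: ifPn => // /set_mem /g0.
have gED t : (g \_ E) t <= (g \_ D \+ (cst +oo) \_ (~` D)) t.
  rewrite /= !patchE in_setC.
  case: (boolP (t \in D)) => [Dt|_] /=; last by rewrite leey.
  by rewrite adde0 ifT //; exact/mem_set/DE/set_mem.
rewrite [LHS]integral_mkcond [RHS]integral_mkcond.
apply/le_anti/andP; split; last exact: le_integral_ge0.
apply: le_trans (le_integral_ge0 _ gED) _ => [t|].
  exact: le_trans (gD0 t) (gDE t).
rewrite ge0_integralD //.
- by rewrite -(integral_mkcond (~` D)) integral_cst // CD0 mule0 adde0.
- by apply/(measurable_restrictT _ mD).1; exact: measurable_funTS.
- by apply/(measurable_restrictT _ mCD).1; exact: measurable_cst.
Qed.

End IntegralConull.

Section HarmonicRepresentation.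
Local Open Scope ereal_scope.
Context {X : countType} {R : realType}.
Variables (b : X -> X -> R) (c : X -> R) (mu : {measure set (borelC X R) -> \bar R}).
Variables (D : set (borelC X R)) (f : X -> R).
Hypotheses (gb : is_graph b) (mD : measurable D) (DS : D `<=` nneg_superharmonic b c).
Hypothesis f_harm : graph_harmonic b c f.
Hypothesis f_rep : forall y, (f y)%:E = \int[mu]_(k in D) (k y)%:E.

Let b_ge0 x y : (0 <= b x y)%R. Proof. by have [] := gb. Qed.

Let k_ge0 k y : D k -> (0 <= k y)%R. Proof. by move=> /DS[]. Qed.

Let f_ge0 y : (0 <= f y)%R.
Proof.
by rewrite -lee_fin f_rep; apply: integral_ge0 => k Dk; rewrite lee_fin k_ge0.
Qed.

Let measurable_scaled_eval (r : R) y :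
  measurable_fun D (fun k : borelC X R => (r * k y)%:E).
Proof.
apply/measurable_funTS/measurable_EFinP.
by apply: measurable_funM; [exact: measurable_cst|exact: measurable_eval].
Qed.

Let row_term_ge0 x n k : D k -> 0 <= pickle_term (fun y => (b x y * k y)%:E) n.
Proof.
by move=> Dk; apply: pickle_term_ge0 => y; rewrite lee_fin mulr_ge0 ?b_ge0 ?k_ge0.
Qed.

Let measurable_row_term x n :
  measurable_fun D (fun k : borelC X R => pickle_term (fun y => (b x y * k y)%:E) n).
Proof.
rewrite /pickle_term; case: pickle_inv => [y|]; last exact: measurable_cst.
exact: measurable_scaled_eval.
Qed.

Lemma measurable_row_series x : measurable_fun D (row_series b x).
Proof.
exact: (@ge0_emeasurable_sum _ _ _ D _ xpredT
  (fun n k Dk _ => row_term_ge0 x n Dk) (fun n _ => measurable_row_term x n)).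
Qed.

Lemma integral_row_series x :
  \int[mu]_(k in D) row_series b x k = (Hdiag b c x * f x)%:E.
Proof.
rewrite integral_nneseries //; last exact: row_term_ge0.
transitivity (\sum_(n <oo) pickle_term (fun y => (b x y * f y)%:E) n).
  apply: eq_eseriesr => n _; rewrite /pickle_term.
  case: pickle_inv => [y|]; last exact: integral0.
  under eq_integral do rewrite EFinM.
  rewrite ge0_integralZl_EFin //.
  - by rewrite -f_rep.
  - by move=> k Dk; rewrite lee_fin k_ge0.
  - by apply/measurable_funTS/measurable_EFinP; exact: measurable_eval.
rewrite -(esum_pickle (a := fun y => (b x y * f y)%:E)); first exact: harmonic_esum.
by move=> y; rewrite lee_fin mulr_ge0.
Qed.

Lemma integral_Hdiag x :
  \int[mu]_(k in D) (Hdiag b c x * k x)%:E = (Hdiag b c x * f x)%:E.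
Proof.
under eq_integral do rewrite EFinM.
rewrite integralZl //; first by rewrite -f_rep.
apply/integrableP; split.
  by apply/measurable_funTS/measurable_EFinP; exact: measurable_eval.
rewrite (eq_integral (fun k : borelC X R => (k x)%:E)) -?f_rep ?ltry //.
by move=> k /set_mem Dk; rewrite gee0_abs // lee_fin k_ge0.
Qed.

Lemma Hop_ae_eq0 x : {ae mu, forall k, D k -> Hop b c k x = 0%R}.
Proof.
pose phi k := (Hdiag b c x * k x)%:E - row_series b x k.
have rowE k : D k -> row_series b x k = \esum_(y in [set: X]) (b x y * k y)%:E.
  by move=> Dk; apply: (row_seriesE gb) => y; exact: k_ge0.
have row_fin k : D k -> row_series b x k \is a fin_num.
  by move=> Dk; rewrite rowE //; apply: (nneg_superharmonic_fin_num gb); exact: DS.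
have phi0 k : D k -> 0 <= phi k.
  by move=> Dk; rewrite /phi sube_ge0 ?row_fin ?orbT // rowE //; exact: (DS Dk).2.
have mphi : measurable_fun D phi.
  exact: emeasurable_funB (measurable_scaled_eval _ _) (measurable_row_series x).
have int_phi : \int[mu]_(k in D) phi k = 0.
  have row0 k : D k -> 0 <= row_series b x k.
    by move=> Dk; apply: nneseries_ge0 => n _ _; exact: row_term_ge0.
  have := ge0_integralD mu mD phi0 mphi row0 (measurable_row_series x).
  rewrite (eq_integral (fun k : borelC X R => (Hdiag b c x * k x)%:E)); last first.
    by move=> k /set_mem Dk; rewrite /phi subeK // row_fin.
  rewrite integral_Hdiag integral_row_series.
  by move=> /(congr1 (fun t => t - (Hdiag b c x * f x)%:E)); rewrite addeK // subee.
have /(ae_eq_integral_abs mu mD mphi).1 : \int[mu]_(k in D) `|phi k| = 0.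
  by rewrite -int_phi; apply: eq_integral => k /set_mem Dk; rewrite gee0_abs // phi0.
apply: filterS => k + Dk => /(_ Dk).
rewrite (nneg_superharmonic_HopE gb x (DS Dk)) /phi.
by rewrite -[in X in X = _](fineK (row_fin k Dk)) rowE // -EFinB => -[].
Qed.

End HarmonicRepresentation.

Theorem lemma3 (R : realType) (X : countType) (b : X -> X -> R) (c : X -> R)
  (G : Type) (mul : G -> G -> G) (inv : G -> G) (one : G) (act : G -> X -> X)
  (x0 : X) (Rg : set G) (f : X -> R)
  (mu : probability (borelC X R) R) :
  is_graph b -> graph_connected b ->
  is_group_action mul inv one act -> H_invariant inv act b c ->
  is_subgroup mul inv one Rg ->
  KRset inv act b c x0 Rg f -> graph_harmonic b c f ->
  mu.-negligible (~` extreme (KRset inv act b c x0 Rg)) ->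
  (forall x, (f x)%:E = (\int[mu]_(k in extreme (KRset inv act b c x0 Rg)) (k x)%:E)%E) ->
  mu.-negligible [set k | extreme (KRset inv act b c x0 Rg) k /\ Hop b c k <> (fun _ => 0)].
Proof.
move=> gb _ _ _ _ _ f_harm negCE f_rep.
set E := extreme _ in negCE f_rep *.
have [N [mN N0 CEN]] := negCE.
have NE : ~` N `<=` E by move=> k Nk; apply: contrapT => /CEN.
have ES : E `<=` nneg_superharmonic b c.
  by move=> k [[/(Kset_nneg_superharmonic gb) Sk _] _].
have f_repN y : (f y)%:E = (\int[mu]_(k in ~` N) (k y)%:E)%E.
  rewrite f_rep; apply: integral_conull => //; first exact: measurableC.
  - by rewrite setCK.
  - by apply/measurable_EFinP; exact: measurable_eval.
  - by move=> k /ES [k0 _]; rewrite lee_fin.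
have /ae_forall_countable Hop0 :=
  Hop_ae_eq0 gb (measurableC mN) (subset_trans NE ES) f_harm f_repN.
have negN : mu.-negligible N by exists N; split.
apply: negligibleS (negligibleU negN Hop0) => k [_ Hk].
have [Nk|nNk] := pselect (N k); [by left|right => /= Hk0; apply: Hk].
by apply/funext => x; exact: Hk0 x nNk.
Qed.
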